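(* (a) If $\tau\in\mathcal{T}$ and the space $(\mathbb{R},\tau)$ is connected and locally connected, then $\tau=\eta$. (b) More precisely: if $\xi\in\Gamma(\tau)$ for some $\tau\in\mathcal{T}$ and $(\mathbb{R},\tau)$ is connected, then $\xi$ does not have a local basis consisting of connected sets in the space $(\mathbb{R},\tau)$.
   Context: $\eta$ denotes the Euclidean topology on $\mathbb{R}$; $\mathcal{T}$ is the family of all topologies on $\mathbb{R}$ finer than $\eta$. $\mathcal{U}_\tau(x)$ is the neighborhood filter of $x$ in topology $\tau$, and $\Gamma(\tau)=\{x\in\mathbb{R}:\mathcal{U}_\eta(x)\neq\mathcal{U}_\tau(x)\}$ (the points where $\tau$ is strictly finer than $\eta$). *)

From Stdlib Require Import Reals.
Open Scope R_scope.

Record is_topology (tau : (R -> Prop) -> Prop) : Prop := {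
  top_empty : tau (fun _ => False);
  top_full  : tau (fun _ => True);
  top_union : forall F : (R -> Prop) -> Prop,
      (forall U, F U -> tau U) -> tau (fun x => exists U, F U /\ U x);
  top_inter : forall U V, tau U -> tau V -> tau (fun x => U x /\ V x)
}.

Definition eta (U : R -> Prop) : Prop :=
  forall x, U x -> exists e, 0 < e /\ forall y, Rabs (y - x) < e -> U y.

(* tau is finer than eta (tau in the family T, together with is_topology). *)
Definition finer_than_eta (tau : (R -> Prop) -> Prop) : Prop :=
  forall U, eta U -> tau U.

Definition nbhd (tau : (R -> Prop) -> Prop) (x : R) (N : R -> Prop) : Prop :=
  exists U, tau U /\ U x /\ forall y, U y -> N y.

Definition Gamma (tau : (R -> Prop) -> Prop) (x : R) : Prop :=
  ~ (forall N, nbhd eta x N <-> nbhd tau x N).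

Definition connected_in (tau : (R -> Prop) -> Prop) (A : R -> Prop) : Prop :=
  forall U V, tau U -> tau V ->
    (forall x, A x -> U x \/ V x) ->
    (exists x, A x /\ U x) -> (exists x, A x /\ V x) ->
    exists x, A x /\ U x /\ V x.

Definition space_connected (tau : (R -> Prop) -> Prop) : Prop :=
  connected_in tau (fun _ => True).

Definition has_connected_local_base (tau : (R -> Prop) -> Prop) (x : R) : Prop :=
  exists B : (R -> Prop) -> Prop,
    (forall C, B C -> nbhd tau x C /\ connected_in tau C) /\
    (forall N, nbhd tau x N -> exists C, B C /\ forall y, C y -> N y).

Definition locally_connected (tau : (R -> Prop) -> Prop) : Prop :=
  forall x, has_connected_local_base tau x.

(* A subset of R that is connected for a topology finer than the Euclidean one
   is connected for the Euclidean topology, hence an interval.  So if xi has a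
   connected tau-neighbourhood C inside a tau-neighbourhood N of xi that is not
   a Euclidean neighbourhood, C cannot reach both sides of xi: it lies, say, in
   [xi, +oo).  Then a tau-open U with xi in U and U inside C splits R into the
   disjoint nonempty tau-open sets (-oo, xi) and U together with (xi, +oo).
   Part (a) follows: every point then has the same tau- and eta-neighbourhoods. *)
From Stdlib Require Import Reals Lra Classical FunctionalExtensionality PropExtensionality.
Open Scope R_scope.

Lemma eta_lt (c : R) : eta (fun z => z < c).
Proof.
  intros x hx. exists (c - x). split; [lra|].
  intros z hz. destruct (Rabs_def2 _ _ hz). lra.
Qed.

Lemma eta_gt (c : R) : eta (fun z => c < z).
Proof.
  intros x hx. exists (x - c). split; [lra|].
  intros z hz. destruct (Rabs_def2 _ _ hz). lra.
Qed.

Lemma eta_open_interval (a b : R) : eta (fun z => a < z < b).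
Proof.
  intros x [hax hxb]. exists (Rmin (x - a) (b - x)). split.
  - apply Rmin_pos; lra.
  - intros y hy.
    pose proof (Rmin_l (x - a) (b - x)). pose proof (Rmin_r (x - a) (b - x)).
    destruct (Rabs_def2 _ _ hy). lra.
Qed.

Lemma eta_of_nbhd (U : R -> Prop) : (forall x, U x -> nbhd eta x U) -> eta U.
Proof.
  intros hU x Ux. destruct (hU x Ux) as [V [HV [Vx VU]]].
  destruct (HV x Vx) as [e [he He]]. exists e. split; auto.
Qed.

Section FinerTopology.

Variable tau : (R -> Prop) -> Prop.
Hypothesis tau_top : is_topology tau.
Hypothesis tau_fine : finer_than_eta tau.

Lemma nbhd_eta_tau (x : R) (N : R -> Prop) : nbhd eta x N -> nbhd tau x N.
Proof. intros [V [HV [Vx VN]]]. exists V. auto. Qed.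

Lemma Gamma_nbhdP (x : R) :
  Gamma tau x <-> exists N, nbhd tau x N /\ ~ nbhd eta x N.
Proof.
  split.
  - intros HG. apply NNPP. intros Hno. apply HG. intros N. split.
    + apply nbhd_eta_tau.
    + intros HtN. apply NNPP. intros HeN. apply Hno. exists N. auto.
  - intros [N [HtN HeN]] Heq. apply HeN, Heq, HtN.
Qed.

Lemma open_union2 (U V : R -> Prop) :
  tau U -> tau V -> tau (fun x => U x \/ V x).
Proof.
  intros HU HV.
  assert (Hunion := top_union tau tau_top (fun W => W = U \/ W = V)).
  enough (Heq : (fun x => exists W, (W = U \/ W = V) /\ W x)
                = (fun x => U x \/ V x)).
  { rewrite <- Heq. apply Hunion. intros W [-> | ->]; assumption. }
  apply functional_extensionality. intros x. apply propositional_extensionality.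
  split.
  - intros [W [[-> | ->] Wx]]; auto.
  - intros [Ux | Vx]; [exists U | exists V]; auto.
Qed.

(* Separate C by the tau-open rays (-oo, y) and (y, +oo). *)
Lemma connected_convex (C : R -> Prop) (a b y : R) :
  connected_in tau C -> C a -> C b -> a < y < b -> C y.
Proof.
  intros HC Ca Cb [hay hyb]. apply NNPP. intros Cy.
  destruct (HC (fun z => z < y) (fun z => y < z)) as [z [_ [hzl hzr]]].
  - apply tau_fine, eta_lt.
  - apply tau_fine, eta_gt.
  - intros z Cz. destruct (Rtotal_order z y) as [h | [-> | h]]; tauto.
  - exists a. auto.
  - exists b. auto.
  - lra.
Qed.

Lemma connected_nbhd_one_sided (x : R) (C N : R -> Prop) :
  connected_in tau C -> (forall y, C y -> N y) -> ~ nbhd eta x N ->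
  (forall y, C y -> x <= y) \/ (forall y, C y -> y <= x).
Proof.
  intros HC CN HeN. apply NNPP. intros Hboth.
  apply not_or_and in Hboth as [Hl Hr].
  apply not_all_ex_not in Hl as [a Ha]. apply imply_to_and in Ha as [Ca hax].
  apply not_all_ex_not in Hr as [b Hb]. apply imply_to_and in Hb as [Cb hxb].
  apply HeN. exists (fun y => a < y < b).
  split; [apply eta_open_interval | split; [lra |]].
  intros y hy. apply CN. exact (connected_convex C a b y HC Ca Cb hy).
Qed.

Lemma disconnected_right_half_nbhd (x : R) (U : R -> Prop) :
  tau U -> U x -> (forall y, U y -> x <= y) -> ~ space_connected tau.
Proof.
  intros HU Ux Uge Hc.
  destruct (Hc (fun z => z < x) (fun z => U z \/ x < z))
    as [z [_ [hzx [Uz | hxz]]]].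
  - apply tau_fine, eta_lt.
  - apply open_union2; [exact HU | apply tau_fine, eta_gt].
  - intros z _. destruct (Rtotal_order z x) as [h | [-> | h]]; tauto.
  - exists (x - 1). split; [exact I | lra].
  - exists x. split; [exact I | auto].
  - specialize (Uge z Uz). lra.
  - lra.
Qed.

Lemma disconnected_left_half_nbhd (x : R) (U : R -> Prop) :
  tau U -> U x -> (forall y, U y -> y <= x) -> ~ space_connected tau.
Proof.
  intros HU Ux Ule Hc.
  destruct (Hc (fun z => x < z) (fun z => U z \/ z < x))
    as [z [_ [hxz [Uz | hzx]]]].
  - apply tau_fine, eta_gt.
  - apply open_union2; [exact HU | apply tau_fine, eta_lt].
  - intros z _. destruct (Rtotal_order z x) as [h | [-> | h]]; tauto.
  - exists (x + 1). split; [exact I | lra].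
  - exists x. split; [exact I | auto].
  - specialize (Ule z Uz). lra.
  - lra.
Qed.

Lemma Gamma_no_connected_local_base (xi : R) :
  Gamma tau xi -> space_connected tau -> ~ has_connected_local_base tau xi.
Proof.
  intros HG Hc [B [HBconn HBbase]].
  apply Gamma_nbhdP in HG as [N [HtN HeN]].
  destruct (HBbase N HtN) as [C [BC CN]].
  destruct (HBconn C BC) as [[U [HU [Uxi UC]]] HC].
  destruct (connected_nbhd_one_sided xi C N HC CN HeN) as [Cge | Cle].
  - apply (disconnected_right_half_nbhd xi U HU Uxi); auto.
  - apply (disconnected_left_half_nbhd xi U HU Uxi); auto.
Qed.

Lemma locally_connected_open_eta :
  space_connected tau -> locally_connected tau ->
  forall U : R -> Prop, tau U <-> eta U.
Proof.
  intros Hc Hl U. split; [| apply tau_fine].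
  intros HU. apply eta_of_nbhd. intros x Ux.
  apply NNPP. intros HeU.
  apply (Gamma_no_connected_local_base x); [| exact Hc | exact (Hl x)].
  apply Gamma_nbhdP. exists U. split; [| exact HeU].
  exists U. auto.
Qed.

End FinerTopology.

Theorem proposition1 :
  (forall tau : (R -> Prop) -> Prop,
      is_topology tau -> finer_than_eta tau ->
      space_connected tau -> locally_connected tau ->
      forall U : R -> Prop, tau U <-> eta U)
  /\
  (forall (tau : (R -> Prop) -> Prop) (xi : R),
      is_topology tau -> finer_than_eta tau ->
      Gamma tau xi -> space_connected tau ->
      ~ has_connected_local_base tau xi).
Proof.
  split.
  - exact locally_connected_open_eta.
  - intros tau xi Htop Hfine.
    exact (Gamma_no_connected_local_base tau Htop Hfine xi).
Qed.
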